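(* Let $\mathcal{C}=\{C_1,\ldots,C_r\}$ be a partition of $C$. Suppose that the sub-vectors $\mathbf{T}^{C_1},\ldots,\mathbf{T}^{C_r}$ are mutually independent, where $\mathbf{T}^{C_j}=(T_i)_{i\in C_j}$, and that each $\mathbf{T}^{C_j}$ is exchangeable. Then $q$ is $\mathcal{C}$-decomposable.
   Context: Consider components $C=[n]$ with random lifetimes $T_1,\ldots,T_n$ whose joint distribution has no ties. The relative quality function is $q(A)=\Pr(\max_{i\notin A}T_i<\min_{i\in A}T_i)$, with $q(\varnothing)=q([n])=1$. For a partition $\mathcal{C}=\{C_1,\ldots,C_r\}$ of $C$ into nonempty blocks, write $n_j=|C_j|$, $A_j=A\cap C_j$, and $q^{C_j}(A)=\Pr(\max_{i\in C_j\setminus A}T_i<\min_{i\in A}T_i)$ for $A\subseteq C_j$. A function $c\colon 2^C\to\mathbb{R}$ is $\mathcal{C}$-symmetric if $c(A)$ depends only on $(|A_1|,\ldots,|A_r|)$. The function $q$ is $\mathcal{C}$-decomposable if $q(A)=c(A)\prod_{j=1}^r q^{C_j}(A_j)$ for all $A\subseteq C$, for some $\mathcal{C}$-symmetric $c$. *)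

From HB Require Import structures.
From mathcomp Require Import all_boot all_order all_algebra all_fingroup.
From mathcomp Require Import all_classical all_reals all_analysis.
Set Implicit Arguments. Unset Strict Implicit. Unset Printing Implicit Defensive.
Import Order.TTheory GRing.Theory Num.Theory.
Local Open Scope classical_set_scope.
Local Open Scope ring_scope.

Section Defs.
Variables (R : realType) (d : measure_display) (T : measurableType d)
  (P : probability T R) (n : nat) (X : 'I_n -> {RV P >-> R}).

Definition no_ties : Prop :=
  forall i j : 'I_n, i != j -> P [set w | X i w = X j w] = 0%E.

Definition sigma_subvector (S : {set 'I_n}) : set (set T) :=
  <<s [set E | exists i B, [/\ i \in S, measurable B & E = X i @^-1` B]] >>.

Definition subvectors_independent (Cs : {set {set 'I_n}}) : Prop :=
  forall E : {set 'I_n} -> set T,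
    (forall Cj, Cj \in Cs -> sigma_subvector Cj (E Cj)) ->
    P [set w | forall Cj, Cj \in Cs -> E Cj w] =
    (\prod_(Cj in Cs) P (E Cj))%E.

(* exchangeability of T^S: for every permutation s of the indices in S,
   (T_{s i})_{i in S} and (T_i)_{i in S} have the same joint law
   (equality on all measurable rectangles of R^S). *)
Definition exchangeable_subvector (S : {set 'I_n}) : Prop :=
  forall s : {perm 'I_n}, perm_on S s ->
  forall B : 'I_n -> set R, (forall i, measurable (B i)) ->
    P [set w | forall i, i \in S -> B i (X (s i) w)] =
    P [set w | forall i, i \in S -> B i (X i w)].

(* relative quality function q(A) = Pr(max_{i notin A} T_i < min_{i in A} T_i),
   with max over empty = -oo and min over empty = +oo *)
Definition q (A : {set 'I_n}) : R :=
  fine (P [set w | forall i j, i \notin A -> j \in A -> X i w < X j w]).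

(* q^{S}(A) = Pr(max_{i in S \ A} T_i < min_{i in A} T_i), for A subset of S *)
Definition qsub (S A : {set 'I_n}) : R :=
  fine (P [set w | forall i j, i \in S -> i \notin A -> j \in A -> X i w < X j w]).

End Defs.

Definition part_symmetric (n : nat) (Cs : {set {set 'I_n}}) (R : Type)
    (c : {set 'I_n} -> R) : Prop :=
  forall A B : {set 'I_n},
    (forall Cj, Cj \in Cs -> #|A :&: Cj| = #|B :&: Cj|) -> c A = c B.

Definition decomposable (R : realType) (d : measure_display)
    (T : measurableType d) (P : probability T R) (n : nat)
    (X : 'I_n -> {RV P >-> R}) (Cs : {set {set 'I_n}}) : Prop :=
  exists c : {set 'I_n} -> R, part_symmetric Cs c /\
    forall A : {set 'I_n},
      q X A = c A * \prod_(Cj in Cs) qsub X Cj (A :&: Cj).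

(* Independence across the blocks and exchangeability within each block make the
   joint law of (T_1, ..., T_n) invariant under every permutation that maps each
   block onto itself: the two laws agree on measurable rectangles, which form a
   pi-system generating the product sigma-algebra.  Swapping an element of A with a
   non-element of the same block is such a permutation, so it changes neither
   q(A) nor the product of the q^{C_j}(A_j); since repeated swaps connect any two
   sets with the same block counts, both are C-symmetric.  Their ratio is then the
   required C-symmetric c, because q(A) <= q^{C_j}(A_j) forces q(A) = 0 whenever the
   product vanishes. *)

From HB Require Import structures.
From mathcomp Require Import all_boot all_order all_algebra all_fingroup.
From mathcomp Require Import all_classical all_reals all_analysis.
From mathcomp Require Import measurable_realfun.
Set Implicit Arguments. Unset Strict Implicit. Unset Printing Implicit Defensive.
Import Order.TTheory GRing.Theory Num.Theory.
Local Open Scope classical_set_scope.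
Local Open Scope ring_scope.

Lemma tperm_swap_mem (T : finType) (A : {set T}) (a b : T) :
  a \in A -> b \notin A -> forall i, (tperm a b i \in b |: A :\ a) = (i \in A).
Proof.
move=> aA bA i; have nab : a != b by apply: contraNneq bA => <-.
case: tpermP => [->|->|/eqP ia /eqP ib]; rewrite !inE ?eqxx //=.
- by rewrite orbF (negPf bA); apply/negbTE.
- by rewrite ia (negPf ib).
Qed.

Section BlockSwaps.
Variables (n : nat) (Cs : {set {set 'I_n}}).
Hypothesis part_Cs : finset.partition Cs [set: 'I_n].

Definition block_perm (s : {perm 'I_n}) :=
  forall Cj, Cj \in Cs -> forall i, (s i \in Cj) = (i \in Cj).

Definition same_block_counts (A B : {set 'I_n}) :=
  forall Cj, Cj \in Cs -> #|A :&: Cj| = #|B :&: Cj|.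

Lemma pblock_in_partition i : finset.pblock Cs i \in Cs.
Proof. by apply: pblock_mem; rewrite (finset.cover_partition part_Cs) inE. Qed.

Lemma mem_pblock_partition i : i \in finset.pblock Cs i.
Proof. by rewrite mem_pblock (finset.cover_partition part_Cs) inE. Qed.

Lemma mem_block_pblock Cj i : Cj \in Cs -> (i \in Cj) = (finset.pblock Cs i == Cj).
Proof.
move=> CjP; apply/idP/eqP => [|<-]; last exact: mem_pblock_partition.
exact: def_pblock (partition_trivIset part_Cs) CjP.
Qed.

Lemma tperm_block_perm Cj a b :
  Cj \in Cs -> a \in Cj -> b \in Cj -> block_perm (tperm a b).
Proof.
move=> CjP aCj bCj Ck CkP i; rewrite !(mem_block_pblock _ CkP); congr (_ == Ck).
by case: tpermP => [->|->|//]; rewrite !(def_pblock (partition_trivIset part_Cs) CjP).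
Qed.

Lemma same_block_counts_block_eq A B Cj : same_block_counts A B -> Cj \in Cs ->
  A :&: Cj \subset B :&: Cj -> A :&: Cj = B :&: Cj.
Proof. by move=> AB CjP sAB; apply/eqP; rewrite eqEcard sAB (AB Cj CjP) leqnn. Qed.

Lemma same_block_counts_subset A B :
  same_block_counts A B -> A \subset B -> A = B.
Proof.
move=> AB sAB; apply/setP => i; have CiP := pblock_in_partition i.
have /setP/(_ i) := same_block_counts_block_eq AB CiP (finset.setSI _ sAB).
by rewrite !inE mem_pblock_partition !andbT.
Qed.

Lemma swap_partner A B a : same_block_counts A B -> a \in A :\: B ->
  exists2 b, b \in B :\: A & b \in finset.pblock Cs a.
Proof.
move=> AB /setDP[aA aB]; set Ca := finset.pblock Cs a.
have CaP : Ca \in Cs by apply: pblock_in_partition.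
apply/exists_inP; apply: contraNT aB => /exists_inPn noPartner.
have sBA : B :&: Ca \subset A :&: Ca.
  apply/fintype.subsetP => x /setIP[xB xCa]; rewrite inE xCa andbT.
  by apply: contraTT xCa => xA; apply: noPartner; rewrite inE xA xB.
have /setP/(_ a) := same_block_counts_block_eq (fun C CP => esym (AB C CP)) CaP sBA.
by rewrite !inE aA mem_pblock_partition !andbT => ->.
Qed.

Lemma swap_same_block_counts (A : {set 'I_n}) a b Cj :
  Cj \in Cs -> a \in Cj -> b \in Cj -> a \in A -> b \notin A ->
  same_block_counts (b |: A :\ a) A.
Proof.
move=> CjP aCj bCj aA bA Ck CkP.
have swapP := tperm_block_perm CjP aCj bCj CkP.
rewrite -(card_preimset _ (@perm_inj _ (tperm a b))); apply: eq_card => i.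
by rewrite inE !finset.in_setI (tperm_swap_mem aA bA) swapP.
Qed.

(* Any two sets with the same block counts are linked by a chain of swaps of an
   element for a non-element of the same block, each swap shrinking [A :\: B]. *)
Lemma part_symmetric_swap (Z : Type) (F : {set 'I_n} -> Z) :
  (forall (A : {set 'I_n}) a b Cj, Cj \in Cs -> a \in Cj -> b \in Cj ->
     a \in A -> b \notin A -> F (b |: A :\ a) = F A) ->
  part_symmetric Cs F.
Proof.
move=> Fswap A B; move: {2}#|A :\: B| (leqnn #|A :\: B|) => k.
elim: k A => [|k IHk] A sizeAB AB.
  congr F; apply: same_block_counts_subset => //.
  by rewrite -finset.setD_eq0 -cards_eq0 -leqn0.
have [/eqP|[a aAB]] := set_0Vmem (A :\: B).
  by rewrite finset.setD_eq0 => /(same_block_counts_subset AB) ->.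
have [b /setDP[bB bA] bCa] := swap_partner AB aAB.
have [aA aB] := setDP aAB; have CaP := pblock_in_partition a.
have aCa := mem_pblock_partition a.
rewrite -(Fswap A a b _ CaP aCa bCa aA bA); apply: IHk.
  rewrite -ltnS (leq_trans _ sizeAB) // (cardsD1 a (A :\: B)) aAB add1n ltnS.
  apply: subset_leq_card; apply/fintype.subsetP => x; rewrite !inE.
  case/andP=> xB /predU1P[xb|/andP[-> ->]]; last by rewrite xB.
  by rewrite xb bB in xB.
move=> Ck CkP; rewrite -(AB Ck CkP).
exact: swap_same_block_counts CaP aCa bCa aA bA Ck CkP.
Qed.

End BlockSwaps.

Lemma part_symmetric_ratio (R : fieldType) n (Cs : {set {set 'I_n}})
    (F G : {set 'I_n} -> R) :
  part_symmetric Cs F -> part_symmetric Cs G -> (forall A, G A = 0 -> F A = 0) ->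
  exists c, part_symmetric Cs c /\ forall A, F A = c A * G A.
Proof.
move=> symF symG G0F0; exists (fun A => F A / G A); split.
  by move=> A B AB; rewrite (symF A B AB) (symG A B AB).
move=> A; have [GA0|GA_neq0] := eqVneq (G A) 0; last by rewrite divfK.
by rewrite GA0 mulr0 G0F0.
Qed.

Definition separated (R : numDomainType) (n : nat) (S A : {set 'I_n})
    (x : 'I_n -> R) :=
  forall i j, i \in S -> i \notin A -> j \in A -> x i < x j.

Lemma separated_perm (R : numDomainType) n (s : {perm 'I_n})
    (S A S' A' : {set 'I_n}) (x : 'I_n -> R) :
  (forall i, (s i \in S') = (i \in S)) -> (forall i, (s i \in A') = (i \in A)) ->
  separated S A (x \o s) <-> separated S' A' x.
Proof.
move=> sS sA; split=> sep i j iS iA jA; last by apply: sep; rewrite ?sS ?sA.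
have := sep (s^-1 i)%g (s^-1 j)%g; rewrite /= !permKV.
by apply; rewrite -?sS -?sA permKV.
Qed.

Lemma measurable_lt_set d (T : measurableType d) (R : realType) (f g : T -> R) :
  measurable_fun setT f -> measurable_fun setT g -> measurable [set x | f x < g x].
Proof.
move=> mf mg; rewrite -[X in measurable X]setTI.
have -> : [set x | f x < g x] = (fun x => f x < g x) @^-1` [set true].
  by apply/seteqP; split=> x /=.
exact: measurable_fun_ltr.
Qed.

Lemma measurable_separated d (T : measurableType d) (R : realType) n
    (Y : T -> 'I_n -> R) (S A : {set 'I_n}) :
  (forall i, measurable_fun setT (Y ^~ i)) -> measurable [set w | separated S A (Y w)].
Proof.
move=> mY; have -> : [set w | separated S A (Y w)] =
    \bigcap_(i in [set i | i \in S :\: A]) \bigcap_(j in [set j | j \in A])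
      [set w | Y w i < Y w j].
  apply/seteqP; split=> w /= sep; first by move=> i /setDP[iS iA] j; exact: sep.
  by move=> i j iS iA; apply: sep; rewrite /= inE iS iA.
apply: fin_bigcap_measurable => // i _; apply: fin_bigcap_measurable => // j _.
exact: measurable_lt_set.
Qed.

Lemma separated_setI (R : numDomainType) n (S A : {set 'I_n}) (x : 'I_n -> R) :
  separated [set: 'I_n] A x -> separated S (A :&: S) x.
Proof.
move=> sep i j iS iAS /setIP[jA _]; apply: sep; rewrite ?inE //.
by apply: contraNN iAS => iA; rewrite inE iA.
Qed.

Section QualityFunctions.
Variables (R : realType) (d : measure_display) (T : measurableType d)
  (P : probability T R) (n : nat) (X : 'I_n -> {RV P >-> R}).

Definition separated_event (S A : {set 'I_n}) := [set w | separated S A (X ^~ w)].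

Lemma q_separated_event A : q X A = fine (P (separated_event [set: 'I_n] A)).
Proof.
congr (fine (P _)); apply/seteqP; split=> w sep i j.
  by move=> _; exact: sep.
by apply: sep; rewrite inE.
Qed.

Lemma qsub_separated_event S A : qsub X S A = fine (P (separated_event S A)).
Proof. by []. Qed.

Lemma measurable_separated_event S A : measurable (separated_event S A).
Proof. by apply: measurable_separated => i; exact: measurable_funPT. Qed.

Lemma q_ge0 A : 0 <= q X A.
Proof. exact/fine_ge0/measure_ge0. Qed.

Lemma q_le_qsub A S : q X A <= qsub X S (A :&: S).
Proof.
rewrite q_separated_event qsub_separated_event.
have mE S' A' : measurable (separated_event S' A') by exact: measurable_separated_event.
apply: fine_le; rewrite ?fin_num_measure //.
by apply: le_measure; rewrite ?inE // => w; exact: separated_setI.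
Qed.

End QualityFunctions.

(* A copy of ['I_n -> R] with the pointed choice structure that
   [g_sigma_algebraType] needs to build a measurable space on it. *)
Definition rvector (R : realType) (n : nat) := 'I_n -> R.
HB.instance Definition _ R n := gen_eqMixin (rvector R n).
HB.instance Definition _ R n := gen_choiceMixin (rvector R n).
HB.instance Definition _ R n := isPointed.Build (rvector R n) (fun _ => 0).

Section ExchangeableBlocks.
Variables (R : realType) (d : measure_display) (T : measurableType d)
  (P : probability T R) (n : nat) (X : 'I_n -> {RV P >-> R})
  (Cs : {set {set 'I_n}}).
Hypothesis part_Cs : finset.partition Cs [set: 'I_n].
Hypothesis indep_Cs : subvectors_independent X Cs.
Hypothesis exch_Cs : forall Cj, Cj \in Cs -> exchangeable_subvector X Cj.
Implicit Types (f : 'I_n -> 'I_n) (S Cj : {set 'I_n}) (B : 'I_n -> set R)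
  (s : {perm 'I_n}).

Definition rect_event (f : 'I_n -> 'I_n) (S : {set 'I_n}) (B : 'I_n -> set R) :=
  [set w | forall i, i \in S -> B i (X (f i) w)].

Lemma rect_event_bigcap f S B :
  rect_event f S B = \bigcap_(i in [set i | i \in S]) X (f i) @^-1` B i.
Proof. by apply/seteqP; split=> w /= H i; apply: H. Qed.

Lemma sigma_subvector_rect_event f S B :
  (forall i, measurable (B i)) -> (forall i, i \in S -> f i \in S) ->
  sigma_subvector X S (rect_event f S B).
Proof.
move=> mB fS; rewrite rect_event_bigcap.
apply: (@fin_bigcap_measurable _ (g_sigma_algebraType _)) => // i iS.
by apply: sub_sigma_algebra; exists (f i), (B i); split => //; exact: fS.
Qed.

Lemma measurable_rect_event f S B :
  (forall i, measurable (B i)) -> measurable (rect_event f S B).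
Proof.
move=> mB; rewrite rect_event_bigcap.
by apply: fin_bigcap_measurable => // i _; exact: measurable_funPTI.
Qed.

Lemma rect_event_blocks f B : rect_event f [set: 'I_n] B =
  [set w | forall Cj, Cj \in Cs -> rect_event f Cj B w].
Proof.
apply/seteqP; split=> w /= H; first by move=> Cj _ i _; apply: H; rewrite inE.
move=> i _; apply: (H _ (pblock_in_partition part_Cs i)).
exact: mem_pblock_partition.
Qed.

Lemma block_restriction s Cj : block_perm Cs s -> Cj \in Cs ->
  exists2 sj : {perm 'I_n}, perm_on Cj sj & {in Cj, sj =1 s}.
Proof.
move=> sP CjP; pose f i := if i \in Cj then s i else i.
have f_inj : injective f.
  move=> i k; rewrite /f; case: ifP => iCj; case: ifP => kCj //.
  - exact: perm_inj.
  - by move=> e; move: kCj; rewrite -e (sP Cj CjP) iCj.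
  - by move=> e; move: iCj; rewrite e (sP Cj CjP) kCj.
exists (perm f_inj); last by move=> i iCj; rewrite permE /f iCj.
by apply/fintype.subsetP => i; rewrite inE permE /f; case: ifP => //; rewrite eqxx.
Qed.

(* Independence factors both sides over the blocks; on each block the
   restriction of [s] is a permutation of that block, so exchangeability applies. *)
Lemma block_perm_rect_event s B :
  block_perm Cs s -> (forall i, measurable (B i)) ->
  P (rect_event s [set: 'I_n] B) = P (rect_event id [set: 'I_n] B).
Proof.
move=> sP mB; rewrite !rect_event_blocks !indep_Cs.
2,3: by move=> Cj CjP; apply: sigma_subvector_rect_event => // i; rewrite ?(sP Cj CjP).
apply: eq_bigr => Cj CjP; have [sj sjCj sjs] := block_restriction sP CjP.
rewrite -(exch_Cs CjP sjCj mB); congr (P _).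
by apply/seteqP; split=> w /= H i iCj; have := H i iCj; rewrite sjs.
Qed.

Definition rects : set (set (rvector R n)) :=
  [set [set v | forall i, B i (v i)] | B in [set B | forall i, measurable (B i)]].
Local Notation U := (g_sigma_algebraType rects).

Definition perm_vector f (w : T) : U := fun i => X (f i) w.

Lemma preimage_perm_vector_rect f B :
  perm_vector f @^-1` [set v | forall i, B i (v i)] = rect_event f [set: 'I_n] B.
Proof. by apply/seteqP; split=> w /= H i; [move=> _|]; apply: H; rewrite ?inE. Qed.

Lemma measurable_perm_vector f : measurable_fun setT (perm_vector f).
Proof.
apply: (@measurability _ _ _ U _ _ rects erefl) => _ [_ [B mB <-] <-].
by rewrite setTI preimage_perm_vector_rect; exact: measurable_rect_event.
Qed.

Lemma block_perm_law s F : block_perm Cs s -> measurable F ->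
  P (perm_vector s @^-1` F) = P (perm_vector id @^-1` F).
Proof.
move=> sP mF.
apply: (@measure_unique _ R U rects (fun _ => setT) erefl _ _ _
  (pushforward P (perm_vector s)) (pushforward P (perm_vector id))) => //.
- move=> _ _ [B1 mB1 <-] [B2 mB2 <-].
  exists (fun i => B1 i `&` B2 i); first by move=> i; apply: measurableI.
  by apply/seteqP; split=> v /= H; [split=> i; case: (H i)|case: H => H1 H2 i].
- by move=> _; exists (fun _ => setT) => //; apply/seteqP; split.
- by apply/seteqP; split=> // v _; exists 0%N.
- exact: measurable_perm_vector.
- exact: measurable_perm_vector.
- move=> ? ? _ [B mB <-]; rewrite /pushforward /=.
  by have := block_perm_rect_event sP mB; rewrite -!preimage_perm_vector_rect.
- move=> ? _; change (P (perm_vector s @^-1` setT) < +oo)%E.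
  by rewrite preimage_setT probability_setT ltry.
Qed.

Lemma measurable_coord i : measurable_fun setT (fun v : U => v i).
Proof.
move=> _ B mB; rewrite setTI; apply: sub_sigma_algebra.
exists (fun k => if k == i then B else setT); first by move=> k; case: eqP.
apply/seteqP; split=> v /=; first by move=> /(_ i); rewrite eqxx.
by move=> Bvi k; case: eqP => // ->.
Qed.

Lemma block_perm_separated_event s (S A S' A' : {set 'I_n}) :
  block_perm Cs s ->
  (forall i, (s i \in S') = (i \in S)) -> (forall i, (s i \in A') = (i \in A)) ->
  P (separated_event X S' A') = P (separated_event X S A).
Proof.
move=> sP sS sA.
have -> : separated_event X S' A' =
    perm_vector s @^-1` [set v : U | separated S A v].
  by apply/seteqP; split=> w /=; move/(separated_perm (X ^~ w) sS sA).
rewrite block_perm_law //.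
by apply: (@measurable_separated _ U _ _ id) => i; exact: measurable_coord.
Qed.

Lemma q_part_symmetric : part_symmetric Cs (q X).
Proof.
apply: (part_symmetric_swap part_Cs) => A a b Cj CjP aCj bCj aA bA.
rewrite !q_separated_event (@block_perm_separated_event (tperm a b) [set: 'I_n] A) //.
- exact: tperm_block_perm CjP aCj bCj.
- by move=> i; rewrite !inE.
- exact: tperm_swap_mem.
Qed.

Lemma prod_qsub_part_symmetric :
  part_symmetric Cs (fun A => \prod_(Cj in Cs) qsub X Cj (A :&: Cj)).
Proof.
apply: (part_symmetric_swap part_Cs) => A a b Cj CjP aCj bCj aA bA.
have swapP := tperm_block_perm part_Cs CjP aCj bCj.
apply: eq_bigr => Ck CkP; rewrite !qsub_separated_event.
rewrite (@block_perm_separated_event (tperm a b) Ck (A :&: Ck)) //.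
- exact: swapP.
- by move=> i; rewrite !finset.in_setI (tperm_swap_mem aA bA) swapP.
Qed.

End ExchangeableBlocks.

Theorem corollary10 (R : realType) (d : measure_display) (T : measurableType d)
  (P : probability T R) (n : nat) (X : 'I_n -> {RV P >-> R})
  (Cs : {set {set 'I_n}}) :
  no_ties X ->
  finset.partition Cs [set: 'I_n] ->
  subvectors_independent X Cs ->
  (forall Cj, Cj \in Cs -> exchangeable_subvector X Cj) ->
  decomposable X Cs.
Proof.
move=> _ part_Cs indep_Cs exch_Cs.
apply: part_symmetric_ratio.
- exact: q_part_symmetric.
- exact: prod_qsub_part_symmetric.
move=> A /eqP/prodf_eq0[Cj _ /eqP qsub0]; apply/eqP.
by rewrite eq_le q_ge0 andbT -qsub0 q_le_qsub.
Qed.
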